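(* In iGDTT$^{\mathrm{ref}}$, let $\mathsf{goodFact}:\mathbb{N}\to\mathbb{N}$ be the factorial function and let $\mathsf{patch}$, $\mathsf{fact}'$, $\mathsf{fact}$ be as defined in the context. Then it is provable inside iGDTT$^{\mathrm{ref}}$ that $\forall n:\mathbb{N}.\ \mathsf{fact}\,n=\big(\_\leftarrow\mathsf{patch}\,\mathbb{N}\,\mathsf{fact}';\ \mathsf{step}^n;\ \mathsf{ret}(\mathsf{goodFact}\,n)\big)$, where $\mathsf{step}^n$ denotes the $n$-fold sequencing of $\mathsf{step}$.
   Context: iGDTT is extensional dependent type theory with impredicative universes $\mathsf{Prop}\subseteq\mathsf{Set}\in\mathsf{Type}_0\in\cdots$ (closed under $\forall x:A.B$ for $A:\mathsf{Type}_i$), a later modality $\triangleright$ with $\mathsf{next}$, and guarded fixed points. A guarded domain is a type $A$ with $\vartheta_A:\triangleright A\to A$; $\delta_A:=\vartheta_A\circ\mathsf{next}$; $\mu_A f:=\mathsf{gfix}\,x.\vartheta_A(\mathsf{next}[z\leftarrow x].fz)$. iGDTT$^{\mathrm{ref}}$ extends iGDTT with: a monad $\mathsf{T}:\mathsf{Set}\to\mathsf{Set}$ (with $\mathsf{ret}$ and bind written $x\leftarrow u;v$); for each $A:\mathsf{Set}$ a map $\vartheta_{\mathsf{T}A}:\triangleright\mathsf{T}A\to\mathsf{T}A$ such that $\delta_{\mathsf{T}B}(x\leftarrow u;vx)=(x\leftarrow\delta_{\mathsf{T}A}u;vx)=(x\leftarrow u;\delta_{\mathsf{T}B}(vx))$;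 $\mathsf{step}:=\delta_{\mathsf{T}1}(\mathsf{ret}())$; for $A:\mathsf{Set}$ a type $\mathsf{ref}\,A:\mathsf{Set}$ with $\mathsf{get}_A\,l:\mathsf{T}A$, $\mathsf{set}_A\,l\,u:\mathsf{T}1$ for $l:\mathsf{ref}\,A$, $u:A$, and $\mathsf{new}_A\,u:\mathsf{T}(\mathsf{ref}\,A)$, subject to the equations: $\mathsf{set}_A l u;\mathsf{get}_A l=\mathsf{step};\mathsf{set}_A l u;\mathsf{ret}\,u$; $(x\leftarrow\mathsf{get}_A l;\mathsf{set}_A l x)=\mathsf{step}$; $(x\leftarrow\mathsf{new}_A u;\mathsf{set}_A x v;\mathsf{ret}\,x)=\mathsf{new}_A v$; $\mathsf{set}_A l u;\mathsf{set}_A l v=\mathsf{set}_A l v$. Let $\bot:=\mu_{\mathsf{T}\alpha}(\lambda x.x)$ be the divergent computation. Define $\mathsf{patch}:\forall\alpha:\mathsf{Set}.((\alpha\to\mathsf{T}\alpha)\to(\alpha\to\mathsf{T}\alpha))\to\mathsf{T}(\mathsf{ref}(\alpha\to\mathsf{T}\alpha))$, $\mathsf{patch}\,\alpha\,F:=r\leftarrow\mathsf{new}(\lambda\_.\bot);\ \mathsf{set}\,r\,(F(\lambda x.f\leftarrow\mathsf{get}\,r;fx));\ \mathsf{ret}\,r$; $\mathsf{knot}\,\alpha\,F\,x:=r\leftarrow\mathsf{patch}\,\alpha\,F;\ F(\lambda z.f\leftarrow\mathsf{get}\,r;fz)\,x$; $\mathsf{fact}':(\mathbb{N}\to\mathsf{T}\mathbb{N})\to\mathbb{N}\to\mathsf{T}\mathbb{N}$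 with $\mathsf{fact}'\,f\,0:=\mathsf{ret}\,1$ and $\mathsf{fact}'\,f\,(n+1):=m\leftarrow f\,n;\ \mathsf{ret}((n+1)\times m)$; $\mathsf{fact}:=\mathsf{knot}\,\mathbb{N}\,\mathsf{fact}'$. *)

(* Shallow embedding of the relevant fragment of iGDTT^ref:
   "provable inside iGDTT^ref" is rendered as "holds in every structure
   interpreting the primitives of iGDTT^ref used by the statement and
   satisfying the stated equations". *)
From Stdlib Require Import Arith.

Set Implicit Arguments.

Record iGDTTref := {
  Later : Type -> Type;
  next : forall A : Type, A -> Later A;
  later_map : forall A B : Type, (A -> B) -> Later A -> Later B;
  later_map_next : forall A B (f : A -> B) (a : A),
      later_map f (next a) = next (f a);
  later_map_id : forall A (x : Later A), later_map (fun a => a) x = x;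
  later_map_comp : forall A B C (f : A -> B) (g : B -> C) (x : Later A),
      later_map g (later_map f x) = later_map (fun a => g (f a)) x;
  gfix : forall A : Type, (Later A -> A) -> A;
  gfix_eq : forall A (f : Later A -> A), gfix f = f (next (gfix f));
  gfix_unique : forall A (f : Later A -> A) (x : A), x = f (next x) -> x = gfix f;
  T : Type -> Type;
  ret : forall A : Type, A -> T A;
  bind : forall A B : Type, T A -> (A -> T B) -> T B;
  bind_ret_l : forall A B (a : A) (k : A -> T B), bind (ret a) k = k a;
  bind_ret_r : forall A (u : T A), bind u (@ret A) = u;
  bind_assoc : forall A B C (u : T A) (k : A -> T B) (h : B -> T C),
      bind (bind u k) h = bind u (fun x => bind (k x) h);
  thetaT : forall A : Type, Later (T A) -> T A;
  deltaT_bind_l : forall A B (u : T A) (v : A -> T B),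
      thetaT (next (bind u v)) = bind (thetaT (next u)) v;
  deltaT_bind_r : forall A B (u : T A) (v : A -> T B),
      thetaT (next (bind u v)) = bind u (fun x => thetaT (next (v x)));
  ref : Type -> Type;
  get : forall A : Type, ref A -> T A;
  set : forall A : Type, ref A -> A -> T unit;
  new : forall A : Type, A -> T (ref A);
  set_get : forall A (l : ref A) (u : A),
      bind (set l u) (fun _ => get l)
      = bind (thetaT (next (ret tt))) (fun _ => bind (set l u) (fun _ => ret u));
  get_set : forall A (l : ref A),
      bind (get l) (fun x => set l x) = thetaT (next (ret tt));
  new_set : forall A (u v : A),
      bind (new u) (fun x => bind (set x v) (fun _ => ret x)) = new v;
  set_set : forall A (l : ref A) (u v : A),
      bind (set l u) (fun _ => set l v) = set l v
}.

Arguments next {_ _} _.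
Arguments later_map {_ _ _} _ _.
Arguments gfix {_ _} _.
Arguments ret {_ _} _.
Arguments bind {_ _ _} _ _.
Arguments thetaT {_ _} _.
Arguments get {_ _} _.
Arguments set {_ _} _ _.
Arguments new {_ _} _.

Section Derived.
Variable M : iGDTTref.

Definition deltaT {A : Type} (u : T M A) : T M A := thetaT (next u).

Definition step : T M unit := deltaT (ret tt).

Fixpoint stepn (n : nat) : T M unit :=
  match n with
  | 0 => ret tt
  | S k => bind step (fun _ => stepn k)
  end.

Definition muT {A : Type} (f : T M A -> T M A) : T M A :=
  gfix (fun x : Later M (T M A) => thetaT (later_map f x)).

Definition bot {A : Type} : T M A := muT (fun x => x).

Definition patch (alpha : Type) (F : (alpha -> T M alpha) -> (alpha -> T M alpha))
  : T M (ref M (alpha -> T M alpha)) :=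
  bind (new (fun _ : alpha => bot))
    (fun r => bind (set r (F (fun x => bind (get r) (fun f => f x))))
                   (fun _ => ret r)).

Definition knot (alpha : Type) (F : (alpha -> T M alpha) -> (alpha -> T M alpha))
  (x : alpha) : T M alpha :=
  bind (patch F) (fun r => F (fun z => bind (get r) (fun f => f z)) x).

Definition fact' (f : nat -> T M nat) (n : nat) : T M nat :=
  match n with
  | 0 => ret 1
  | S k => bind (f k) (fun m => ret (S k * m))
  end.

Definition fact : nat -> T M nat := knot fact'.

End Derived.

Arguments step {M}.
Arguments stepn {M} _.

Definition goodFact (n : nat) : nat := Factorial.fact n.

(* After [patch F] the reference [r] holds [F (call_ref r)], so by [set_get]
   each call through [r] re-reads [F] at the price of one [step], and [step]
   commutes with every computation.  Hence the [n] nested recursive calls of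
   [fact'] unfold into [step^n] followed by [ret n!]; the induction on [n]
   is carried out under an arbitrary continuation. *)
From Stdlib Require Import FunctionalExtensionality.

Section Knot.
Variable M : iGDTTref.

Lemma bind_ext {A B} (u : T M A) (k k' : A -> T M B) :
  (forall x, k x = k' x) -> bind u k = bind u k'.
Proof.
  intro Hk. f_equal. extensionality x. apply Hk.
Qed.

Lemma bind_step_l {B} (u : T M B) : bind step (fun _ => u) = deltaT M u.
Proof.
  unfold step, deltaT. rewrite <- deltaT_bind_l, bind_ret_l. reflexivity.
Qed.

Lemma bind_step_comm {A B} (u : T M A) (v : A -> T M B) :
  bind step (fun _ => bind u v) = bind u (fun x => bind step (fun _ => v x)).
Proof.
  rewrite bind_step_l. unfold deltaT. rewrite deltaT_bind_r.
  apply bind_ext. intro x. rewrite bind_step_l. reflexivity.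
Qed.

Definition call_ref {A} (r : ref M (A -> T M A)) (z : A) : T M A :=
  bind (get r) (fun f => f z).

Lemma set_call_ref {A B} (r : ref M (A -> T M A)) (g : A -> T M A) z
    (h : A -> T M B) :
  bind (set r g) (fun _ => bind (call_ref r z) h)
  = bind (set r g) (fun _ => bind step (fun _ => bind (g z) h)).
Proof.
  unfold call_ref.
  transitivity (bind (bind (set r g) (fun _ => get r)) (fun f => bind (f z) h)).
  { rewrite !bind_assoc. reflexivity. }
  rewrite set_get. change (thetaT (next (ret tt))) with (@step M).
  rewrite !bind_assoc, bind_step_comm.
  apply bind_ext. intros _. rewrite bind_ret_l. reflexivity.
Qed.

Lemma patch_call_ref {A B} (F : (A -> T M A) -> A -> T M A) z
    (h : ref M (A -> T M A) -> A -> T M B) :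
  bind (patch M F) (fun r => bind (call_ref r z) (h r))
  = bind (patch M F) (fun r => bind step (fun _ => bind (F (call_ref r) z) (h r))).
Proof.
  unfold patch. rewrite !bind_assoc.
  apply bind_ext. intro r. rewrite !bind_assoc.
  transitivity (bind (set r (F (call_ref r))) (fun _ => bind (call_ref r z) (h r))).
  { apply bind_ext. intros _. apply bind_ret_l. }
  rewrite set_call_ref.
  apply bind_ext. intros _. rewrite bind_ret_l. reflexivity.
Qed.

Lemma patch_fact'_call_ref {B} n (h : ref M (nat -> T M nat) -> nat -> T M B) :
  bind (patch M (fact' M)) (fun r => bind (fact' M (call_ref r) n) (h r))
  = bind (patch M (fact' M)) (fun r => bind (stepn n) (fun _ => h r (goodFact n))).
Proof.
  revert B h. induction n as [|k IH]; intros B h.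
  - apply bind_ext. intro r. simpl. rewrite !bind_ret_l. reflexivity.
  - set (h' r m := h r (S k * m)).
    transitivity (bind (patch M (fact' M)) (fun r => bind (call_ref r k) (h' r))).
    { apply bind_ext. intro r. simpl. rewrite bind_assoc.
      apply bind_ext. intro m. rewrite bind_ret_l. reflexivity. }
    rewrite patch_call_ref.
    transitivity (bind (patch M (fact' M))
                    (fun r => bind (fact' M (call_ref r) k)
                                (fun m => bind step (fun _ => h' r m)))).
    { apply bind_ext. intro r. apply bind_step_comm. }
    rewrite IH. apply bind_ext. intro r.
    simpl. rewrite bind_assoc, bind_step_comm. reflexivity.
Qed.

End Knot.

Theorem lemma3p1 (M : iGDTTref) :
  forall n : nat,
    fact M n
    = bind (patch M (fact' M))
           (fun _ => bind (stepn n) (fun _ => ret (goodFact n))).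
Proof.
  intro n. unfold fact, knot.
  transitivity (bind (patch M (fact' M))
                  (fun r => bind (fact' M (call_ref M r) n) (fun x => ret x))).
  { apply bind_ext. intro r. symmetry. apply bind_ret_r. }
  apply patch_fact'_call_ref.
Qed.
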